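(* Let $A\in M_n(\mathbb{FT})$ and let $G$ and $H$ be units of $M_n(\mathbb{T})$ which commute with $A$ (under tropical multiplication). Suppose $G$ and $H$ both have maximum cycle mean $0$. Then $G\otimes H$ has maximum cycle mean $0$.
   Context: $\mathbb{FT}$ is $\mathbb{R}$ with $a\oplus b=\max(a,b)$, $a\otimes b=a+b$; $\mathbb{T}=\mathbb{R}\cup\{-\infty\}$ with the obvious extensions. Matrices multiply by $(A\otimes B)_{i,j}=\bigoplus_k A_{i,k}\otimes B_{k,j}$. Units of the monoid $M_n(\mathbb{T})$ are the matrices with exactly one entry different from $-\infty$ in each row and column. For $B\in M_n(\mathbb{T})$, $\Gamma_B$ is the weighted digraph on $\{1,\dots,n\}$ with an edge $j\to i$ of weight $B_{i,j}$ whenever $B_{i,j}\neq-\infty$; the maximum cycle mean of $B$ is the maximum, over all closed paths in $\Gamma_B$, of the arithmetic mean of the edge weights. *)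

(* Tropical semiring T = R ∪ {-oo} modelled as option R,
   with None = -oo; FT = R. *)
From HB Require Import structures.
From mathcomp Require Import all_boot all_order all_algebra.
From mathcomp Require Import reals.
Set Implicit Arguments. Unset Strict Implicit. Unset Printing Implicit Defensive.
Import Order.TTheory GRing.Theory Num.Theory.
Local Open Scope ring_scope.

Section Tropical.
Variable R : realType.

Definition tadd (a b : option R) : option R :=
  match a, b with
  | None, _ => b
  | _, None => a
  | Some x, Some y => Some (Num.max x y)
  end.

Definition tmul (a b : option R) : option R :=
  match a, b with
  | Some x, Some y => Some (x + y)
  | _, _ => None
  end.

Definition tmx_mul n (A B : 'M[option R]_n) : 'M[option R]_n :=
  \matrix_(i, j) \big[tadd/None]_(k < n) tmul (A i k) (B k j).

Definition tmx_one n : 'M[option R]_n :=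
  \matrix_(i, j) if i == j then Some 0 else None.

Definition tunit n (G : 'M[option R]_n) : Prop :=
  exists K : 'M[option R]_n, tmx_mul G K = tmx_one n /\ tmx_mul K G = tmx_one n.

Definition ft_mx n (A : 'M[R]_n) : 'M[option R]_n := map_mx Some A.

(* A closed path of length k >= 1 in Gamma_B: vertices f 0, ..., f k = f 0,
   with edges f t -> f (t+1), i.e. B (f t.+1) (f t) <> -oo. *)
Definition closed_path n (B : 'M[option R]_n) (k : nat) (f : nat -> 'I_n) : Prop :=
  (0 < k)%N /\ f k = f 0%N /\ (forall t, (t < k)%N -> B (f t.+1) (f t) <> None).

Definition path_mean n (B : 'M[option R]_n) (k : nat) (f : nat -> 'I_n) : R :=
  (\sum_(t < k) odflt 0 (B (f t.+1) (f t))) / k%:R.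

Definition max_cycle_mean_is n (B : 'M[option R]_n) (m : R) : Prop :=
  (exists k f, closed_path B k f /\ path_mean B k f = m) /\
  (forall k f, closed_path B k f -> path_mean B k f <= m).

End Tropical.

(* A unit of M_n(T) is monomial: it sends vertex j to s j with weight w j for
   a permutation s, so its closed paths are exactly the traversals of orbits
   of s.  Commuting with a finite matrix A forces
   A (s i) (s j) + w j = w i + A i j; iterating this #[s] times, where s^#[s]
   is the identity, shows that all orbit sums over #[s] steps coincide, hence
   every cycle mean equals the average weight (\sum_j w j) / n.  Weights of
   G (x) H are those of G reindexed by the permutation of H plus those of H,
   so the maximum cycle means add up. *)
From HB Require Import structures.
From mathcomp Require Import all_boot all_order all_fingroup all_algebra.
From mathcomp Require Import reals.
From mathcomp Require Import ring lra.
Set Implicit Arguments. Unset Strict Implicit. Unset Printing Implicit Defensive.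
Import Order.TTheory GRing.Theory Num.Theory.
Local Open Scope ring_scope.

Section TropicalMatrices.
Variables (R : realType) (n : nat).
Implicit Types (B C : 'M[option R]_n) (s : {perm 'I_n}) (w : 'I_n -> R).

Lemma tadd0l (a : option R) : tadd None a = a. Proof. by case: a. Qed.
Lemma tadd0r (a : option R) : tadd a None = a. Proof. by case: a. Qed.

Lemma taddC : commutative (@tadd R).
Proof. by case=> [x|] [y|] //=; rewrite maxC. Qed.

Lemma taddA : associative (@tadd R).
Proof. by case=> [x|] [y|] [z|] //=; rewrite maxA. Qed.

HB.instance Definition _ := Monoid.isComLaw.Build (option R) None (@tadd R)
  taddA taddC tadd0l.

Lemma big_tadd1 (I : finType) (F : I -> option R) k0 :
  (forall k, k != k0 -> F k = None) -> \big[@tadd R/None]_(k : I) F k = F k0.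
Proof.
move=> F0; rewrite (bigD1 k0) //= big1 ?tadd0r // => k /F0.
Qed.

Lemma big_tadd_neqN (I : finType) (F : I -> option R) :
  (\big[@tadd R/None]_(k : I) F k != None) = [exists k, F k != None].
Proof.
apply/idP/existsP => [|[k Fk]].
  elim/big_rec: _ => [//|k x _ IH]; case E: (F k) => [a|].
    by exists k; rewrite E.
  by rewrite tadd0l.
rewrite (bigD1 k) //=; case: (F k) Fk => // a _.
by case: (\big[_/_]_(i | _) _).
Qed.

Lemma tmx_mul_neqN B C i j :
  (tmx_mul B C i j != None) = [exists k, (B i k != None) && (C k j != None)].
Proof.
rewrite mxE big_tadd_neqN; apply: eq_existsb => k.
by case: (B i k); case: (C k j).
Qed.

Lemma tmx_mul_eq1_diag B C i :
  tmx_mul B C = tmx_one R n -> exists k, B i k != None /\ C k i != None.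
Proof.
move=> BC; have : tmx_mul B C i i != None by rewrite BC mxE eqxx.
by rewrite tmx_mul_neqN => /existsP [k /andP []]; exists k.
Qed.

Lemma tmx_mul_eq1_supp B C i k j :
  tmx_mul B C = tmx_one R n -> B i k != None -> C k j != None -> i = j.
Proof.
move=> BC Bik Ckj; apply/eqP; apply: contraTT isT => ij.
have : tmx_mul B C i j != None.
  by rewrite tmx_mul_neqN; apply/existsP; exists k; rewrite Bik.
by rewrite BC mxE (negbTE ij).
Qed.

Definition tmx_monomial B s w :=
  forall i j, B i j = if i == s j then Some (w j) else None.

Lemma tunit_monomial B : tunit B -> exists s w, tmx_monomial B s w.
Proof.
move=> [K [BK KB]].
have col_ex l : exists i, B i l != None.
  by have [m [_ ?]] := tmx_mul_eq1_diag l KB; exists m.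
have col_uniq l i i' : B i l != None -> B i' l != None -> i = i'.
  have [m [Klm _]] := tmx_mul_eq1_diag l KB.
  move=> Bil Bi'l.
  by rewrite (tmx_mul_eq1_supp BK Bil Klm) (tmx_mul_eq1_supp BK Bi'l Klm).
have row_uniq i k k' : B i k != None -> B i k' != None -> k = k'.
  have [m [_ Kmi]] := tmx_mul_eq1_diag i BK.
  move=> Bik Bik'.
  by rewrite -(tmx_mul_eq1_supp KB Kmi Bik) (tmx_mul_eq1_supp KB Kmi Bik').
pose s l := odflt l [pick i | B i l != None].
have sP l : B (s l) l != None.
  rewrite /s; case: pickP => [//|none]; have [i Bil] := col_ex l.
  by rewrite none in Bil.
have s_inj : injective s by move=> l l' e; apply: (row_uniq (s l)); rewrite // e.
exists (perm s_inj), (fun j => odflt 0 (B (s j) j)) => i j.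
rewrite permE; have [->|ne] := eqVneq i (s j); first by case: (B (s j) j) (sP j).
by apply/eqP; apply: contraNT ne => Bij; rewrite (col_uniq _ _ _ Bij (sP j)).
Qed.

Lemma tmx_mul_monomial B C sB sC wB wC :
  tmx_monomial B sB wB -> tmx_monomial C sC wC ->
  tmx_monomial (tmx_mul B C) (sC * sB)%g (fun j => wB (sC j) + wC j).
Proof.
move=> mB mC i j; rewrite mxE (big_tadd1 (k0 := sC j)); last first.
  by move=> k nk; rewrite mC (negbTE nk); case: (B i k).
by rewrite mC eqxx permM mB; case: ifP.
Qed.

(* Entrywise form of [G (x) A = A (x) G] for [G] monomial with data [s], [w]. *)
Definition conj_invariant (A : 'M[R]_n) s w :=
  forall i j, A (s i) (s j) + w j = w i + A i j.

Lemma ft_comm_monomial (A : 'M[R]_n) B s w :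
  tmx_monomial B s w -> tmx_mul (ft_mx A) B = tmx_mul B (ft_mx A) ->
  conj_invariant A s w.
Proof.
move=> mB AB i j; have := congr1 (fun M : 'M_n => M (s i) j) AB; rewrite !mxE.
rewrite (big_tadd1 (k0 := s j)); last first.
  by move=> k nk; rewrite mB (negbTE nk); case: (ft_mx A (s i) k).
rewrite (big_tadd1 (k0 := i)); last first.
  by move=> k nk; rewrite mB (inj_eq perm_inj) eq_sym (negbTE nk).
by rewrite /ft_mx !mxE !mB !eqxx => -[->]; rewrite addrC.
Qed.

Lemma conj_invariant_mul (A : 'M[R]_n) sB sC wB wC :
  conj_invariant A sB wB -> conj_invariant A sC wC ->
  conj_invariant A (sC * sB)%g (fun j => wB (sC j) + wC j).
Proof.
move=> AB AC i j; rewrite !permM.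
by have := AB (sC i) (sC j); have := AC i j; lra.
Qed.

End TropicalMatrices.

Section OrbitSums.
Variables (R : realType) (n : nat) (s : {perm 'I_n}) (w : 'I_n -> R).

Definition orbit_sum (a : 'I_n) (t : nat) : R := \sum_(u < t) w (iter u s a).

Lemma iter_order a : iter #[s]%g s a = a.
Proof. by rewrite -permX expg_order perm1. Qed.

Lemma orbit_sumM k m a :
  iter k s a = a -> orbit_sum a (m * k) = m%:R * orbit_sum a k.
Proof.
move=> sk; have skm u : iter (u * k) s a = a.
  by elim: u => [//|u IH]; rewrite mulSn iterD IH sk.
elim: m => [|m IH]; first by rewrite mul0n /orbit_sum big_ord0 mul0r.
rewrite mulSnr /orbit_sum big_split_ord /= -/(orbit_sum a (m * k)) IH.
under eq_bigr do rewrite addnC iterD skm.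
by rewrite -/(orbit_sum a k) mulrSr mulrDl mul1r.
Qed.

Lemma sum_orbit_sum t : \sum_j orbit_sum j t = t%:R * \sum_j w j.
Proof.
rewrite /orbit_sum exchange_big /= (eq_bigr (fun=> \sum_j w j)) => [|u _].
  by rewrite sumr_const card_ord mulr_natl.
rewrite [RHS](reindex_inj (@perm_inj _ (s ^+ u)%g)) /=.
by apply: eq_bigr => j _; rewrite permX.
Qed.

Variable A : 'M[R]_n.
Hypothesis A_inv : conj_invariant A s w.

Lemma conj_invariant_expg t : conj_invariant A (s ^+ t)%g (orbit_sum^~ t).
Proof.
move=> i j; rewrite !permX; elim: t => [|t IH].
  by rewrite /orbit_sum !big_ord0 addr0 add0r.
rewrite /orbit_sum !big_ord_recr /= -/(orbit_sum j t) -/(orbit_sum i t).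
by have := A_inv (iter t s i) (iter t s j); lra.
Qed.

Lemma orbit_sum_order i j : orbit_sum i #[s]%g = orbit_sum j #[s]%g.
Proof.
by have := conj_invariant_expg #[s]%g i j; rewrite expg_order !perm1 /=; lra.
Qed.

Lemma orbit_mean k a : (0 < k)%N -> iter k s a = a ->
  orbit_sum a k / k%:R = (\sum_j w j) / n%:R.
Proof.
move=> k_gt0 sk; set P := #[s]%g.
have n_gt0 : (0 < n)%N := leq_ltn_trans (leq0n a) (ltn_ord a).
have nz m : (0 < m)%N -> m%:R != 0 :> R by rewrite pnatr_eq0 -lt0n.
have P_k : P%:R * orbit_sum a k = k%:R * orbit_sum a P.
  by rewrite -!orbit_sumM ?iter_order // mulnC.
have n_P : n%:R * orbit_sum a P = P%:R * \sum_j w j.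
  rewrite -sum_orbit_sum (eq_bigr _ (fun j _ => orbit_sum_order j a)).
  by rewrite sumr_const card_ord mulr_natl.
apply/eqP; rewrite eqr_div ?nz ?order_gt0 //; apply/eqP.
apply: (mulfI (nz _ (order_gt0 s))).
by rewrite -/P mulrA P_k -mulrA [_ * n%:R]mulrC n_P; ring.
Qed.

End OrbitSums.

Section MonomialCycleMean.
Variables (R : realType) (n : nat) (B : 'M[option R]_n).
Variables (s : {perm 'I_n}) (w : 'I_n -> R).
Hypothesis B_monomial : tmx_monomial B s w.

Lemma closed_path_orbit k f : closed_path B k f ->
  iter k s (f 0%N) = f 0%N /\ path_mean B k f = orbit_sum s w (f 0%N) k / k%:R.
Proof.
move=> [_ [fk Bf]].
have f_succ t : (t < k)%N -> f t.+1 = s (f t).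
  by move=> tk; have := Bf t tk; rewrite B_monomial; case: eqP.
have f_iter t : (t <= k)%N -> f t = iter t s (f 0%N).
  by elim: t => [//|t IH] tk; rewrite f_succ // IH // ltnW.
split; first by rewrite -f_iter // fk.
rewrite /path_mean /orbit_sum; congr (_ / _); apply: eq_bigr => t _.
by rewrite f_succ // B_monomial eqxx /= f_iter // ltnW.
Qed.

Lemma orbit_closed_path k a : (0 < k)%N -> iter k s a = a ->
  closed_path B k (fun t => iter t s a) /\
  path_mean B k (fun t => iter t s a) = orbit_sum s w a k / k%:R.
Proof.
move=> k_gt0 sk; split.
  by split=> //; split=> // t _; rewrite /= B_monomial eqxx.
rewrite /path_mean /orbit_sum; congr (_ / _).
by apply: eq_bigr => t _; rewrite /= B_monomial eqxx.
Qed.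

Lemma monomial_max_cycle_mean (A : 'M[R]_n) (a : 'I_n) :
  conj_invariant A s w -> max_cycle_mean_is B ((\sum_j w j) / n%:R).
Proof.
move=> A_inv; split.
  have [cp mean] := orbit_closed_path (order_gt0 s) (iter_order s a).
  exists #[s]%g, (fun t => iter t s a); split=> //.
  by rewrite mean (orbit_mean A_inv) ?order_gt0 ?iter_order.
move=> k f cp; have [sk ->] := closed_path_orbit cp.
by rewrite (orbit_mean A_inv) //; case: cp.
Qed.

End MonomialCycleMean.

Lemma max_cycle_mean_is_unique (R : realType) n (B : 'M[option R]_n) a b :
  max_cycle_mean_is B a -> max_cycle_mean_is B b -> a = b.
Proof.
move=> [[k [f [cp <-]]] le_a] [[k' [f' [cp' <-]]] le_b].
by apply/eqP; rewrite eq_le le_b // le_a.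
Qed.

Lemma max_cycle_mean_mul (R : realType) (n : nat) (A : 'M[R]_n)
    (G H : 'M[option R]_n) a b :
  tunit G -> tunit H ->
  tmx_mul (ft_mx A) G = tmx_mul G (ft_mx A) ->
  tmx_mul (ft_mx A) H = tmx_mul H (ft_mx A) ->
  max_cycle_mean_is G a -> max_cycle_mean_is H b ->
  max_cycle_mean_is (tmx_mul G H) (a + b).
Proof.
move=> /tunit_monomial [sG [wG mG]] /tunit_monomial [sH [wH mH]] AG AH.
move=> mcmG mcmH.
have [_ [f _]] := mcmG.1; set i0 := f 0%N.
have invG := ft_comm_monomial mG AG; have invH := ft_comm_monomial mH AH.
have -> : a = (\sum_j wG j) / n%:R.
  exact: max_cycle_mean_is_unique mcmG (monomial_max_cycle_mean mG i0 invG).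
have -> : b = (\sum_j wH j) / n%:R.
  exact: max_cycle_mean_is_unique mcmH (monomial_max_cycle_mean mH i0 invH).
have sumGH : \sum_j (wG (sH j) + wH j) = \sum_j wG j + \sum_j wH j.
  by rewrite big_split /= [\sum_j wG j](reindex_inj (@perm_inj _ sH)).
rewrite -mulrDl -sumGH.
exact: (monomial_max_cycle_mean (tmx_mul_monomial mG mH) i0
  (conj_invariant_mul invG invH)).
Qed.

Theorem lemma7p7 (R : realType) (n : nat) (A : 'M[R]_n) (G H : 'M[option R]_n) :
  tunit G -> tunit H ->
  tmx_mul (ft_mx A) G = tmx_mul G (ft_mx A) ->
  tmx_mul (ft_mx A) H = tmx_mul H (ft_mx A) ->
  max_cycle_mean_is G 0 -> max_cycle_mean_is H 0 ->
  max_cycle_mean_is (tmx_mul G H) 0.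
Proof.
move=> uG uH AG AH mcmG mcmH.
by rewrite -[0 : R]addr0; exact: max_cycle_mean_mul uG uH AG AH mcmG mcmH.
Qed.
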